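(* Let $A=kQ/I$ be a nondegenerate dimer algebra on a torus with center $Z$, and let $\psi:A\to A'$ be a cyclic contraction. If $A$ is a finitely generated $Z$-module, then $S$ is a finitely generated $R$-module.
   Context: Let $k$ be an algebraically closed field. A dimer quiver is a finite quiver $Q$ (vertices $Q_0$, arrows $Q_1$, head/tail $\operatorname{h},\operatorname{t}$) whose underlying graph embeds in a real two-torus so that each connected component of the complement is simply connected and bounded by an oriented cycle (a unit cycle). The dimer algebra is $A=kQ/I$, $I$ generated by all $p-q$ with $p,q$ paths such that for some arrow $a$ both $pa$ and $qa$ are unit cycles. Perfect matching: $D\subseteq Q_1$ meeting each unit cycle in exactly one arrow; nondegenerate: every arrow in some perfect matching. Simple matching: perfect matching $D$ such that the subquiver with arrows $Q_1\setminus D$ contains a cycle through every vertex. Cancellative: no paths $p\neq q$ of $A$ and path $r$ with $rp=rq\neq0$ or $pr=qr\neq0$. For a dimer algebra $A'=kQ'/I'$ with simple matchings $\mathcal{S}'$, $\tau:A'\to M_{|Q'_0|}(k[x_D:D\in\mathcal{S}'])$ is the algebra map with $\tau(e_i)=E_{ii}$, $\tau(a)=\big(\prod_{D\in\mathcal{S}',a\in D}x_D\big)E_{\operatorname{h}(a),\operatorname{t}(a)}$; $\bar\tau(p)$ is given by $\tau(p)=\bar\tau(p)E_{ji}$ for $p\in e_jA'e_i$, extended $k$-linearly. A contraction $\psi:A\to A'$: $A'=kQ'/I'$ is a dimer algebra with $Q'$ obtained from $Q$ by contracting a set of arrows $Q_1^*\subseteq Q_1$ to vertices, the induced map $kQ\to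 kQ'$ sending $I$ into $I'$ and inducing $\psi$. It is cyclic if $A'$ is cancellative and $S:=k[\cup_{i\in Q_0}\bar\tau\psi(e_iAe_i)]=k[\cup_{i\in Q'_0}\bar\tau(e_iA'e_i)]$. $R:=k[\cap_{i\in Q_0}\bar\tau\psi(e_iAe_i)]$ (isomorphic to the center of the homotopy algebra of $A$). *)

From HB Require Import structures.
From mathcomp Require Import all_boot all_order all_algebra.
From mathcomp Require Import mpoly.
From Stdlib Require Import Relations.Relation_Operators ClassicalDescription.

Set Implicit Arguments.
Unset Strict Implicit.
Unset Printing Implicit Defensive.

Import GRing.Theory.
Local Open Scope ring_scope.

(* A face/unit cycle is stored as the sequence of its arrows in        *)
(* traversal order (first arrow traversed first), up to rotation.      *)
Record quiver := Quiver {
  V : finType;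
  Ar : finType;
  hd : Ar -> V;
  tl : Ar -> V;
  Fc : finType;             (* index set of the unit cycles (faces) *)
  cyc : Fc -> seq Ar;
  pos : Fc -> bool          (* orientation class of each face (Q_2^+ / Q_2^-) *)
}.

Section Quiv.
Variable Q : quiver.

Definition consec (a b : Ar Q) : bool := hd a == tl b.

(* a path is a start vertex plus its arrows in traversal order *)
Definition qpath := (V Q * seq (Ar Q))%type.

Definition valid (p : qpath) : bool :=
  if p.2 is a :: s then (tl a == p.1) && path consec a s else true.

Definition pend (p : qpath) : V Q :=
  if p.2 is a :: s then hd (last a s) else p.1.

(* Combinatorial description of a cellular embedding (Bocklandt's      *)
(* definition of a dimer quiver): faces glued along arrows, every      *)
(* arrow in exactly one positive and one negative face, every vertex   *)
(* link connected; the resulting closed oriented surface is a torus    *)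
(* iff it is connected and has Euler characteristic 0.                 *)

Definition arrow_end (x : Ar Q * bool) : V Q :=
  if x.2 then hd x.1 else tl x.1.

Definition follows_in_face (a b : Ar Q) : Prop :=
  exists f : Fc Q, exists2 i : nat, (i < size (cyc f))%N &
    nth a (cyc f) i = a /\ nth a (cyc f) (i.+1 %% size (cyc f)) = b.

Definition incidence_edge (v : V Q) (x y : Ar Q * bool) : Prop :=
  [/\ x.2, ~~ y.2, hd x.1 = v, tl y.1 = v & follows_in_face x.1 y.1].

Definition is_dimer : Prop :=
  [/\
      (forall f : Fc Q, cyc f != [::] /\ cycle consec (cyc f)),
      (forall a : Ar Q,
          (\sum_(f : Fc Q | pos f) count_mem a (cyc f) = 1)%N /\
          (\sum_(f : Fc Q | ~~ pos f) count_mem a (cyc f) = 1)%N),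
      (* the link of every vertex is connected (closed surface) *)
      (forall (v : V Q) (x y : Ar Q * bool), arrow_end x = v -> arrow_end y = v ->
          clos_refl_sym_trans _ (incidence_edge v) x y),
      (0 < #|{: V Q}|)%N /\
      (forall x y : V Q, clos_refl_sym_trans _
          (fun u w => exists a : Ar Q, tl a = u /\ hd a = w) x y) &
      (* Euler characteristic |Q0| - |Q1| + |Q2| = 0 : torus *)
      (#|{: V Q}| + #|{: Fc Q}| = #|{: Ar Q}|)%N ].

Definition perfect_matching (D : {set Ar Q}) : Prop :=
  forall f : Fc Q, #|[set a in D | a \in cyc f]| = 1%N.

Definition dimer_nondegenerate : Prop :=
  forall a : Ar Q, exists D : {set Ar Q}, perfect_matching D /\ a \in D.

Definition simple_matching (D : {set Ar Q}) : Prop :=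
  perfect_matching D /\
  exists p : qpath, [/\ valid p, p.2 != [::], pend p = p.1,
     all (fun a => a \notin D) p.2 &
     forall w : V Q, w \in [seq tl a | a <- p.2]].

Variable k : closedFieldType.

(* elements of kQ: finite formal k-linear combinations of paths
   (entries with non-valid paths are ignored, i.e. count as 0) *)
Definition comb := seq (k * qpath).

Definition coef (x : comb) (p : qpath) : k := \sum_(e <- x | e.2 == p) e.1.

Definition eqkQ (x y : comb) : Prop := forall p, valid p -> coef x p = coef y p.

Definition pathc (p : qpath) : comb := [:: (1, p)].
Definition idem (v : V Q) : comb := pathc (v, [::]).
Definition addc (x y : comb) : comb := x ++ y.
Definition scalec (c : k) (x : comb) : comb := [seq (c * e.1, e.2) | e <- x].
Definition subc (x y : comb) : comb := x ++ scalec (-1) y.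

(* product, with the paper's convention: p * q = "q then p",
   nonzero iff q ends where p starts *)
Definition mulc (x y : comb) : comb :=
  flatten [seq [seq (e.1 * f.1, (f.2.1, f.2.2 ++ e.2.2))
               | f <- y & [&& valid e.2, valid f.2 & pend f.2 == e.2.1]]
          | e <- x].

Definition unit_cycle (s : seq (Ar Q)) : Prop :=
  exists f : Fc Q, exists r : nat, s = rot r (cyc f).

(* generating relations of I: p - q with pa and qa unit cycles
   ("pa" = a followed by p) *)
Definition rel_gen (p q : qpath) : Prop :=
  exists a : Ar Q, [/\ p.1 = hd a, q.1 = hd a,
                      unit_cycle (a :: p.2) & unit_cycle (a :: q.2)].

Definition inI (x : comb) : Prop :=
  exists gens : seq (k * qpath * qpath * qpath * qpath),
    (forall g, g \in gens -> rel_gen g.1.1.2 g.1.2) /\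
    eqkQ x (flatten [seq scalec g.1.1.1.1
                      (mulc (pathc g.1.1.1.2)
                         (mulc (subc (pathc g.1.1.2) (pathc g.1.2)) (pathc g.2)))
                    | g <- gens]).

Definition eqA (x y : comb) : Prop := inI (subc x y).

Definition in_center (z : comb) : Prop := forall a : comb, eqA (mulc z a) (mulc a z).

Definition fg_over_center : Prop :=
  exists gs : seq comb, forall a : comb, exists zs : seq comb,
    [/\ size zs = size gs, (forall z, z \in zs -> in_center z) &
        eqA a (flatten [seq mulc zg.1 zg.2 | zg <- zip zs gs])].

Definition cancellative : Prop :=
  forall p q r : qpath, valid p -> valid q -> valid r ->
    ~ eqA (pathc p) (pathc q) ->
    ~ (eqA (mulc (pathc r) (pathc p)) (mulc (pathc r) (pathc q)) /\
       ~ eqA (mulc (pathc r) (pathc p)) [::]) /\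
    ~ (eqA (mulc (pathc p) (pathc r)) (mulc (pathc q) (pathc r)) /\
       ~ eqA (mulc (pathc p) (pathc r)) [::]).

(* k[x_D : D simple matching]: we use one variable per subset of Q_1;
   only variables x_D with D a simple matching ever occur. *)
Definition nvars := #|{: {set Ar Q}}|.
Definition poly := {mpoly k[nvars]}.

Definition is_simple_b (D : {set Ar Q}) : bool :=
  if excluded_middle_informative (simple_matching D) then true else false.

Definition xvar (D : {set Ar Q}) : poly := 'X_(enum_rank D).

Definition tau_mono (p : qpath) : poly :=
  \prod_(a <- p.2)
     \prod_(D : {set Ar Q} | is_simple_b D && (a \in D)) xvar D.

Definition taubar (x : comb) : poly :=
  \sum_(e <- x | valid e.2) e.1 *: tau_mono e.2.

Definition taubar_corner (j : V Q) (P : poly) : Prop :=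
  exists x : comb, P = taubar (mulc (idem j) (mulc x (idem j))).

End Quiv.

Inductive alg_gen (k : closedFieldType) (n : nat) (X : {mpoly k[n]} -> Prop)
  : {mpoly k[n]} -> Prop :=
| alg_gen_base P : X P -> alg_gen X P
| alg_gen_const c : alg_gen X c%:MP
| alg_gen_add P1 P2 : alg_gen X P1 -> alg_gen X P2 -> alg_gen X (P1 + P2)
| alg_gen_mul P1 P2 : alg_gen X P1 -> alg_gen X P2 -> alg_gen X (P1 * P2).

Definition fg_module (k : closedFieldType) (n : nat)
  (R S : {mpoly k[n]} -> Prop) : Prop :=
  exists gs : seq {mpoly k[n]}, (forall g, g \in gs -> S g) /\
    forall P, S P -> exists rs : seq {mpoly k[n]},
      [/\ size rs = size gs, (forall r, r \in rs -> R r) &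
          P = \sum_(rg <- zip rs gs) rg.1 * rg.2].

Section Contraction.
Variables (Q Q' : quiver) (Qs : {set Ar Q}) (pi0 : V Q -> V Q') (pi1 : Ar Q -> Ar Q').

(* Q' is obtained from Q by contracting the arrows of Qs to vertices:
   Q'_0 = Q_0 / (equivalence generated by the arrows in Qs),
   Q'_1 = Q_1 \ Qs, with induced head and tail maps. *)
Definition contracted_quiver : Prop :=
  [/\ (forall v' : V Q', exists v : V Q, pi0 v = v'),
      (forall x y : V Q, pi0 x = pi0 y <->
         clos_refl_sym_trans _
           (fun u w => exists2 a : Ar Q, a \in Qs & tl a = u /\ hd a = w) x y),
      {in [predC Qs] &, injective pi1},
      (forall b : Ar Q', exists2 a : Ar Q, a \notin Qs & pi1 a = b) &
      (forall a : Ar Q, a \notin Qs ->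
         hd (pi1 a) = pi0 (hd a) /\ tl (pi1 a) = pi0 (tl a))].

Definition psi_path (p : qpath Q) : qpath Q' :=
  (pi0 p.1, [seq pi1 a | a <- p.2 & a \notin Qs]).

Definition psi (k : closedFieldType) (x : comb Q k) : comb Q' k :=
  [seq (e.1, psi_path e.2) | e <- x & valid e.2].

Definition contraction (k : closedFieldType) : Prop :=
  [/\ is_dimer Q, is_dimer Q', contracted_quiver &
      forall x : comb Q k, inI x -> inI (psi x)].

Definition taubar_psi_corner (k : closedFieldType) (i : V Q) (P : poly Q' k) : Prop :=
  exists x : comb Q k, P = taubar (psi (mulc (@idem Q k i) (mulc x (@idem Q k i)))).

Definition Salg (k : closedFieldType) : poly Q' k -> Prop :=
  alg_gen (fun P => exists i : V Q, @taubar_psi_corner k i P).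

Definition Ralg (k : closedFieldType) : poly Q' k -> Prop :=
  alg_gen (fun P => forall i : V Q, @taubar_psi_corner k i P).

Definition cyclic_contraction (k : closedFieldType) : Prop :=
  [/\ @contraction k, @cancellative Q' k &
      forall P, @Salg k P <-> alg_gen (fun P => exists j : V Q', @taubar_corner Q' k j P) P].

End Contraction.

Arguments Salg : clear implicits.
Arguments Ralg : clear implicits.
Arguments cyclic_contraction : clear implicits.
Arguments contraction : clear implicits.

From Pilot Require Import Defs.
From mathcomp Require Import all_boot all_algebra mpoly.
From Stdlib Require Import Relations.Relation_Operators ClassicalDescription.

(* Weigh each arrow of Q by 1 if it is contracted and by the tau-monomial of its
   image in Q' otherwise.  Summing the weights of the paths from i to j turns an
   element x of kQ into a matrix tau(x) with tau(xy) = tau(x) tau(y), and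
   taubar psi (e_i x e_i) is the diagonal entry tau(x)_ii.  Every simple matching of
   the dimer Q' meets every unit cycle exactly once, so all unit cycles of Q' have
   the same weight; as psi maps I into I', tau kills I and factors through A.
   For z central, tau(z) commutes with tau(e_i) and with the tau of every arrow;
   arrow weights are nonzero and Q is connected, so tau(z) is scalar and its
   diagonal entry lies in R.  If A = sum_m Z g_m, each corner ring
   taubar psi (e_i A e_i) is then the R-span of tau(e_i)_ii and the tau(g_m)_ii.
   Corner rings are closed under products, so S, the algebra they generate, is the
   R-span of the finitely many products taking one such generator from each corner.
   Nondegeneracy, cancellativity of A' and the second description of S in the
   definition of a cyclic contraction are not needed. *)

Set Implicit Arguments.
Unset Strict Implicit.
Unset Printing Implicit Defensive.
Import GRing.Theory.
Local Open Scope ring_scope.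

Section Paths.
Variable X : quiver.

Lemma valid_cons (v : V X) (a : Ar X) s :
  valid (v, a :: s) = (tl a == v) && valid (hd a, s).
Proof. by case: s => [|b s]; rewrite /valid //= /consec [hd a == _]eq_sym. Qed.

Lemma pend_cons (v : V X) (a : Ar X) s : pend (v, a :: s) = pend (hd a, s).
Proof. by case: s. Qed.

Lemma pend_last (a : Ar X) s : pend (hd a, s) = hd (last a s).
Proof. by case: s. Qed.

Lemma valid_cat (v v' : V X) (s1 s2 : seq (Ar X)) :
  valid (v, s1) -> valid (v', s2) -> pend (v, s1) = v' ->
  valid (v, s1 ++ s2) /\ pend (v, s1 ++ s2) = pend (v', s2).
Proof.
elim: s1 v => [|a s IH] v.
  by move=> _ vs2 ends; rewrite -ends in vs2 *.
rewrite !valid_cons !pend_cons => /andP[-> vs] vs2 ends.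
exact: IH.
Qed.

Lemma dimer_cyc_cycle : is_dimer X -> forall f : Fc X, cycle (@consec X) (cyc f).
Proof. by case=> faces _ _ _ _ f; case: (faces f). Qed.

Hypothesis cyc_cycle : forall f : Fc X, cycle (@consec X) (cyc f).

Lemma unit_cycle_valid (a : Ar X) s : unit_cycle (a :: s) ->
  valid (hd a, s) /\ pend (hd a, s) = tl a.
Proof.
case=> f [r E]; have : cycle (@consec X) (a :: s) by rewrite E rot_cycle.
rewrite /= rcons_path => /andP[ps /eqP ends]; split; last by rewrite pend_last.
by move: (valid_cons (tl a) a s); rewrite eqxx /= => <-; rewrite /valid /= eqxx.
Qed.

Lemma rel_gen_parallel (p q : qpath X) : rel_gen p q ->
  [/\ valid p, valid q, p.1 = q.1 & pend p = pend q].
Proof.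
case: p q => [u s] [w t] [a [/= -> -> /unit_cycle_valid[vs es] /unit_cycle_valid[vt et]]].
by split; rewrite // es et.
Qed.

End Paths.

Section Combinations.
Variables (k : closedFieldType) (X : quiver).
Implicit Types (x y : comb X k) (p q : qpath X).

Definition corner_comb (i : V X) x := mulc (idem k i) (mulc x (idem k i)).

Lemma coef_cat x y p : coef (x ++ y) p = coef x p + coef y p.
Proof. by rewrite /coef big_cat. Qed.

Lemma coef_scale c x p : coef (scalec c x) p = c * coef x p.
Proof. by rewrite /coef /scalec big_map mulr_sumr. Qed.

Lemma coef_sub x y p : coef (subc x y) p = coef x p - coef y p.
Proof. by rewrite /subc coef_cat coef_scale mulN1r. Qed.

Lemma rel_gen_in_I p q : (forall f : Fc X, cycle (@consec X) (cyc f)) ->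
  rel_gen p q -> inI (subc (pathc k p) (pathc k q)).
Proof.
move=> cyc_cycle pq; have [vp vq e1 e2] := rel_gen_parallel cyc_cycle pq.
(* [p - q = 1 * e_(pend p) * (p - q) * e_(p.1)] *)
exists [:: ((1, (pend p, [::]), p, q), (p.1, [::]))]; split.
  by move=> g; rewrite inE => /eqP ->.
case: p q pq vp vq e1 e2 => [u s] [w t] /= _ vp vq uw e2 r _; subst w.
rewrite /mulc /subc /scalec /pathc /= vp vq e2 eqxx /= vq e2 eqxx /= vp /=.
by rewrite !cats0 !mul1r !mulr1.
Qed.

End Combinations.

Section Weights.
Variables (k : closedFieldType) (X : quiver) (B : comAlgType k) (phi : Ar X -> B).
Implicit Types (x y : comb X k) (p q : qpath X).

Definition pweight p : B := \prod_(a <- p.2) phi a.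

Definition cweight (E : V X -> V X -> bool) x : B :=
  \sum_(e <- x | valid e.2 && E e.2.1 (pend e.2)) e.1 *: pweight e.2.

Definition weight x := cweight (fun _ _ => true) x.

(* Entry (j, i) weighs the paths from [i] to [j], as in the paper's
   [tau(a) = (...) E_(h(a), t(a))]. *)
Definition tau x (j i : V X) := cweight (fun u v => (u == i) && (v == j)) x.

Lemma pweight_cat (u v : V X) s t : pweight (u, s ++ t) = pweight (u, s) * pweight (v, t).
Proof. by rewrite /pweight big_cat. Qed.

Lemma cweight_cat E x y : cweight E (x ++ y) = cweight E x + cweight E y.
Proof. by rewrite /cweight big_cat. Qed.

Lemma cweight_scale E c x : cweight E (scalec c x) = c *: cweight E x.
Proof.
rewrite /cweight /scalec big_map scaler_sumr.
by apply: eq_bigr => e _; rewrite scalerA.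
Qed.

Lemma cweight_sub E x y : cweight E (subc x y) = cweight E x - cweight E y.
Proof. by rewrite /subc cweight_cat cweight_scale scaleN1r. Qed.

Lemma cweight_flatten E (xs : seq (comb X k)) :
  cweight E (flatten xs) = \sum_(x <- xs) cweight E x.
Proof.
elim: xs => [|x xs IH]; first by rewrite big_nil /cweight big_nil.
by rewrite /= cweight_cat IH big_cons.
Qed.

Lemma tau_flatten (xs : seq (comb X k)) j i : tau (flatten xs) j i = \sum_(x <- xs) tau x j i.
Proof. exact: cweight_flatten. Qed.

Lemma cweight_pathc E p :
  cweight E (pathc k p) = if valid p && E p.1 (pend p) then pweight p else 0.
Proof. by rewrite /cweight big_mkcond big_seq1 /=; case: ifP; rewrite ?scale1r. Qed.

Lemma cweight_coef E x : cweight E x =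
  \sum_(p <- undup (map snd x) | valid p && E p.1 (pend p)) coef x p *: pweight p.
Proof.
rewrite /cweight /coef.
under [RHS]eq_bigr => p _ do rewrite scaler_suml big_mkcond /=.
rewrite exchange_big /= [LHS]big_mkcond /=; apply: eq_big_seq => e ex.
have ein : e.2 \in undup (map snd x) by rewrite mem_undup map_f.
rewrite big_mkcond (bigD1_seq e.2) ?undup_uniq //= eqxx big1 ?addr0; first by case: ifP.
by move=> p /negbTE ne; rewrite eq_sym ne; case: ifP.
Qed.

Lemma eqkQ_cweight E x y : eqkQ x y -> cweight E x = cweight E y.
Proof.
move=> xy; apply/eqP; rewrite -subr_eq0 -cweight_sub cweight_coef big1 // => p /andP[vp _].
by rewrite coef_sub xy // subrr scale0r.
Qed.

Lemma tau_mulc x y j i : tau (mulc x y) j i = \sum_m tau x j m * tau y m i.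
Proof.
pose T (e f : k * qpath X) : B :=
  if [&& valid e.2, valid f.2, pend f.2 == e.2.1, f.2.1 == i & pend e.2 == j]
  then (e.1 * f.1) *: (pweight f.2 * pweight e.2) else 0.
transitivity (\sum_(e <- x) \sum_(f <- y) T e f).
  rewrite /tau /cweight /mulc big_flatten big_map; apply: eq_bigr => e _.
  rewrite big_map big_filter_cond big_mkcond; apply: eq_bigr => f _ /=.
  rewrite /T; case: (boolP [&& valid e.2, valid f.2 & pend f.2 == e.2.1]).
    case/and3P => ve vf fe; have [-> ->] := valid_cat vf ve (eqP fe).
    by rewrite ve vf fe (pweight_cat _ e.2.1).
  by move/negbTE => nfe; case: ifP => // /and5P[ve vf fe _ _]; rewrite ve vf fe in nfe.
under [RHS]eq_bigr => m _.
  rewrite /tau /cweight big_mkcond mulr_suml.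
  under eq_bigr => e _ do rewrite big_mkcond mulr_sumr.
  over.
rewrite /= [RHS]exchange_big; apply: eq_bigr => e _.
rewrite [RHS]exchange_big; apply: eq_bigr => f _.
rewrite (bigD1 e.2.1) //= big1 ?addr0 => [|m /negbTE ne]; last first.
  by rewrite [e.2.1 == m]eq_sym ne andbF mul0r.
rewrite /T eqxx.
case: (valid e.2); case: (valid f.2); case: (pend f.2 == e.2.1);
  case: (f.2.1 == i); case: (pend e.2 == j); rewrite /= ?mul0r ?mulr0 //.
by rewrite -scalerAl -scalerAr scalerA mulrC [pweight f.2 * _]mulrC.
Qed.

Lemma tau_idem v j i : tau (idem k v) j i = ((v == i) && (v == j))%:R.
Proof. by rewrite /tau /idem cweight_pathc /pweight /pend big_nil /=; case: ifP. Qed.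

Lemma tau_arrow (c : Ar X) j i :
  tau (pathc k (tl c, [:: c])) j i = ((tl c == i) && (hd c == j))%:R * phi c.
Proof.
rewrite /tau cweight_pathc /pweight big_seq1 /= /valid /= eqxx /=.
by case: ifP; rewrite ?mul1r ?mul0r.
Qed.

Lemma weight_tau x : weight x = \sum_i \sum_j tau x j i.
Proof.
rewrite /weight /tau /cweight [LHS]big_mkcond.
under [RHS]eq_bigr => i _.
  under eq_bigr => j _ do rewrite big_mkcond.
  rewrite exchange_big.
  over.
rewrite /= exchange_big; apply: eq_bigr => e _.
rewrite (bigD1 e.2.1) //= (bigD1 (pend e.2)) //= !eqxx andbT.
rewrite big1 ?addr0 => [|j /negbTE ne]; last by rewrite eq_sym ne /= andbF.
rewrite big1 ?addr0 // => i /negbTE ne.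
by apply: big1 => j _; rewrite [e.2.1 == i]eq_sym ne andbF.
Qed.

Lemma tau_corner i x j l :
  tau (corner_comb i x) j l = ((l == i) && (j == i))%:R * tau x i i.
Proof.
rewrite /corner_comb tau_mulc (bigD1 i) //= big1 ?addr0 => [|m /negbTE ne]; last first.
  by rewrite tau_idem [i == m]eq_sym ne mul0r.
rewrite tau_idem tau_mulc (bigD1 i) //= big1 ?addr0 => [|m /negbTE ne]; last first.
  by rewrite tau_idem [i == m]eq_sym ne andbF mulr0.
rewrite tau_idem !eqxx andbT /= [j == i]eq_sym [l == i]eq_sym.
by case: (i == j); case: (i == l); rewrite /= ?mul1r ?mul0r ?mulr1 ?mulr0.
Qed.

Lemma weight_corner i x : weight (corner_comb i x) = tau x i i.
Proof.
rewrite weight_tau (bigD1 i) //= [X in _ + X]big1 ?addr0 => [|l /negbTE ne]; last first.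
  by apply: big1 => j _; rewrite tau_corner ne mul0r.
rewrite (bigD1 i) //= big1 ?addr0 => [|j /negbTE ne]; last by rewrite tau_corner ne andbF mul0r.
by rewrite tau_corner !eqxx mul1r.
Qed.

Lemma tau_corner_mul i x y :
  tau x i i * tau y i i = tau (mulc (corner_comb i x) (corner_comb i y)) i i.
Proof.
rewrite tau_mulc (bigD1 i) //= big1 ?addr0 => [|m /negbTE ne]; last first.
  by rewrite tau_corner ne mulr0n !mul0r.
by rewrite !tau_corner !eqxx !mul1r.
Qed.

Hypothesis cyc_cycle : forall f : Fc X, cycle (@consec X) (cyc f).
Hypothesis pweight_rel : forall p q, rel_gen p q -> pweight p = pweight q.

Lemma tau_I x j i : inI x -> tau x j i = 0.
Proof.
case=> gens [gens_rel xI]; rewrite /tau (eqkQ_cweight _ xI) cweight_flatten big_map.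
rewrite big_seq big1 // => g /gens_rel pq; rewrite cweight_scale -/(tau _ j i).
rewrite tau_mulc big1 ?scaler0 // => m _; rewrite tau_mulc big1 ?mulr0 // => l _.
have [vp vq e1 e2] := rel_gen_parallel cyc_cycle pq.
by rewrite /tau cweight_sub !cweight_pathc vp vq e1 e2 (pweight_rel pq) subrr mul0r.
Qed.

Lemma weight_I x : inI x -> weight x = 0.
Proof. by move=> xI; rewrite weight_tau big1 // => i _; rewrite big1 // => j _; apply: tau_I. Qed.

Lemma tau_eqA j i x y : eqA x y -> tau x j i = tau y j i.
Proof. by move/(tau_I j i)/eqP; rewrite /tau cweight_sub subr_eq0 => /eqP. Qed.

Lemma tau_center_offdiag z j i : in_center z -> i != j -> tau z j i = 0.
Proof.
move=> hz ij; have := tau_eqA j i (hz (idem k i)); rewrite !tau_mulc.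
rewrite (bigD1 i) //= big1 ?addr0 => [|m /negbTE ne]; last first.
  by rewrite tau_idem [i == m]eq_sym ne andbF mulr0.
rewrite tau_idem !eqxx mulr1 => ->.
by apply: big1 => m _; rewrite tau_idem (negbTE ij) andbF mul0r.
Qed.

Lemma tau_center_mulc z x i : in_center z -> tau (mulc z x) i i = tau z i i * tau x i i.
Proof.
move=> hz; rewrite tau_mulc (bigD1 i) //= big1 ?addr0 // => m ne.
by rewrite tau_center_offdiag // mul0r.
Qed.

Lemma tau_center_arrow z (c : Ar X) : in_center z -> GRing.lreg (phi c) ->
  tau z (tl c) (tl c) = tau z (hd c) (hd c).
Proof.
move=> hz reg_c; have := tau_eqA (hd c) (tl c) (hz (pathc k (tl c, [:: c]))).
rewrite !tau_mulc (bigD1 (hd c)) //= big1 ?addr0 => [|m /negbTE ne]; last first.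
  by rewrite tau_arrow eqxx [hd c == m]eq_sym ne mul0r mulr0.
rewrite (bigD1 (tl c)) //= big1 ?addr0 => [|m /negbTE ne]; last first.
  by rewrite tau_arrow [tl c == m]eq_sym ne !mul0r.
by rewrite !tau_arrow !eqxx !mul1r mulrC => /reg_c ->.
Qed.

Lemma tau_center_scalar z u w : in_center z -> (forall c, GRing.lreg (phi c)) ->
  clos_refl_sym_trans _ (fun u w => exists c : Ar X, tl c = u /\ hd c = w) u w ->
  tau z u u = tau z w w.
Proof.
move=> hz reg; elim=> [_ _ [c [<- <-]]|//|_ _ _ ->|_ _ _ _ -> _ ->] //.
exact: tau_center_arrow.
Qed.

End Weights.

Section SimpleMatchings.
Variables (k : closedFieldType) (Y : quiver).

Definition matching_weight (a : Ar Y) : Defs.poly Y k :=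
  \prod_(D : {set Ar Y} | is_simple_b D && (a \in D)) xvar k D.

Lemma xvar_neq0 (D : {set Ar Y}) : xvar k D != 0.
Proof.
apply/eqP => D0; have := mcoeffXU k (enum_rank D) (enum_rank D).
by rewrite -/(xvar k D) D0 mcoeff0 eqxx => /eqP; rewrite eq_sym oner_eq0.
Qed.

Lemma matching_weight_neq0 a : matching_weight a != 0.
Proof.
apply: (big_ind (fun P => P != 0)); first exact: oner_neq0.
  by move=> ? ? ? ?; rewrite mulf_neq0.
by move=> D _; apply: xvar_neq0.
Qed.

Hypothesis dimerY : is_dimer Y.

Lemma cyc_uniq (f : Fc Y) : uniq (cyc f).
Proof.
case: dimerY => _ once _ _ _; apply: count_mem_uniq => a.
have : (count_mem a (cyc f) <= 1)%N.
  have [pos1 neg1] := once a.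
  by case: (boolP (pos f)) => pf; [rewrite -pos1 | rewrite -neg1]; rewrite (bigD1 f) ?leq_addr.
by rewrite -has_pred1 has_count; case: (count_mem a (cyc f)) => [|[|]].
Qed.

Lemma face_weight (f : Fc Y) :
  \prod_(a <- cyc f) matching_weight a = \prod_(D : {set Ar Y} | is_simple_b D) xvar k D.
Proof.
rewrite /matching_weight; under eq_bigr => a _ do rewrite big_mkcondr.
rewrite exchange_big /=; apply: eq_bigr => D simD.
rewrite -big_mkcond big_const_seq.
suff -> : count (mem D) (cyc f) = 1%N by rewrite /= mulr1.
have pmD : perfect_matching D.
  by move: simD; rewrite /is_simple_b; case: excluded_middle_informative => // [[]].
rewrite -size_filter -(card_uniqP _) ?filter_uniq ?cyc_uniq // -(pmD f).
by apply: eq_card => a; rewrite mem_filter !inE.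
Qed.

Lemma matching_weight_rel p q : rel_gen p q ->
  pweight matching_weight p = pweight matching_weight q.
Proof.
case=> a [_ _ [f [r fE]] [g [s gE]]].
have face_pweight (h : Fc Y) n t : a :: t = rot n (cyc h) ->
    matching_weight a * \prod_(b <- t) matching_weight b =
    \prod_(D : {set Ar Y} | is_simple_b D) xvar k D.
  move=> hE; rewrite -(face_weight h); transitivity (\prod_(b <- a :: t) matching_weight b).
    by rewrite big_cons.
  by apply: perm_big; rewrite hE perm_rot.
rewrite /pweight; apply: (mulfI (matching_weight_neq0 a)).
by rewrite (face_pweight _ _ _ fE) (face_pweight _ _ _ gE).
Qed.

Lemma taubar_weight (y : comb Y k) : taubar y = weight matching_weight y.
Proof. by rewrite /taubar /weight /cweight; apply: eq_bigl => e; rewrite andbT. Qed.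

Lemma taubar_I (y : comb Y k) : inI y -> taubar y = 0.
Proof.
by move=> yI; rewrite taubar_weight (weight_I (dimer_cyc_cycle dimerY) matching_weight_rel).
Qed.

End SimpleMatchings.

Lemma alg_gen0 (k : closedFieldType) (n : nat) (X : {mpoly k[n]} -> Prop) : alg_gen X 0.
Proof. by rewrite -mpolyC0; apply: alg_gen_const. Qed.

Lemma alg_gen1 (k : closedFieldType) (n : nat) (X : {mpoly k[n]} -> Prop) : alg_gen X 1.
Proof. by rewrite -mpolyC1; apply: alg_gen_const. Qed.

Section ProductSpan.
Variables (B : comPzRingType) (Rp : B -> Prop).
Hypotheses (Rp0 : Rp 0) (Rp1 : Rp 1).
Hypothesis RpD : forall a b, Rp a -> Rp b -> Rp (a + b).
Hypothesis RpM : forall a b, Rp a -> Rp b -> Rp (a * b).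
Variables (I : finType) (N : nat) (L : I -> 'I_N -> B).

Definition in_span (i : I) (P : B) :=
  exists2 r : 'I_N -> B, forall m, Rp (r m) & P = \sum_m r m * L i m.

Definition prod_monomial (c : {ffun I -> 'I_N}) := \prod_i L i (c i).

Definition in_prod_span (P : B) :=
  exists2 r : {ffun I -> 'I_N} -> B, forall c, Rp (r c) & P = \sum_c r c * prod_monomial c.

Lemma in_prod_span_prod (F : I -> B) :
  (forall i, in_span i (F i)) -> in_prod_span (\prod_i F i).
Proof.
case/fin_all_exists2=> r Rr rE; exists (fun c => \prod_i r i (c i)) => [c|].
  by apply: big_ind => // i _; apply: Rr.
under eq_bigr => i _ do rewrite rE.
by rewrite bigA_distr_bigA; apply: eq_bigr => c _; rewrite big_split.
Qed.

Lemma in_prod_span0 : in_prod_span 0.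
Proof. by exists (fun _ => 0) => //; rewrite big1 // => c _; rewrite mul0r. Qed.

Lemma in_prod_spanD P P' : in_prod_span P -> in_prod_span P' -> in_prod_span (P + P').
Proof.
move=> [r Rr ->] [r' Rr' ->]; exists (fun c => r c + r' c) => [c|]; first exact: RpD.
by rewrite -big_split; apply: eq_bigr => c _; rewrite mulrDl.
Qed.

Lemma in_prod_span_scale s P : Rp s -> in_prod_span P -> in_prod_span (s * P).
Proof.
move=> Rs [r Rr ->]; exists (fun c => s * r c) => [c|]; first exact: RpM.
by rewrite mulr_sumr; apply: eq_bigr => c _; rewrite mulrA.
Qed.

Lemma in_prod_span_sum (J : finType) (F : J -> B) :
  (forall j, in_prod_span (F j)) -> in_prod_span (\sum_j F j).
Proof. by move=> Fspan; apply: big_ind => //; [exact: in_prod_span0 | exact: in_prod_spanD]. Qed.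

Hypothesis span_one : forall i, in_span i 1.
Hypothesis span_mul : forall i m m', in_span i (L i m * L i m').

Lemma in_prod_span_in_span i P : in_span i P -> in_prod_span P.
Proof.
move=> Pspan; have -> : P = \prod_j (if j == i then P else 1).
  by rewrite (bigD1 i) //= eqxx big1 ?mulr1 // => j /negbTE ->.
by apply: in_prod_span_prod => j; case: eqP => [->|_].
Qed.

Lemma in_prod_span_R s : Rp s -> in_prod_span s.
Proof.
move=> Rs; have -> : s = s * \prod_(i : I) 1 by rewrite big1 ?mulr1.
by apply: in_prod_span_scale => //; apply: in_prod_span_prod.
Qed.

Lemma in_prod_spanM P P' : in_prod_span P -> in_prod_span P' -> in_prod_span (P * P').
Proof.
move=> [r Rr ->] [r' Rr' ->]; rewrite mulr_suml; apply: in_prod_span_sum => c.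
rewrite mulr_sumr; apply: in_prod_span_sum => d.
rewrite mulrACA; apply: in_prod_span_scale; first exact: RpM.
by rewrite -big_split; apply: in_prod_span_prod => i; apply: span_mul.
Qed.

End ProductSpan.

Lemma fg_module_prod_span (k : closedFieldType) (n : nat) (R S : {mpoly k[n]} -> Prop)
    (I : finType) (N : nat) (L : I -> 'I_N -> {mpoly k[n]}) :
  (forall c, S (prod_monomial L c)) -> (forall P, S P -> in_prod_span R L P) ->
  fg_module R S.
Proof.
move=> Smon Sspan; exists [seq prod_monomial L c | c <- index_enum {ffun I -> 'I_N}].
split=> [_ /mapP[c _ ->] //|P /Sspan[r Rr ->]].
exists [seq r c | c <- index_enum {ffun I -> 'I_N}].
by split=> [|_ /mapP[c _ ->] //|]; rewrite ?size_map // zip_map big_map.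
Qed.

Section Contraction.
Variables (k : closedFieldType) (Q Q' : quiver) (Qs : {set Ar Q})
  (pi0 : V Q -> V Q') (pi1 : Ar Q -> Ar Q').

Definition contracted_weight (a : Ar Q) : Defs.poly Q' k :=
  if a \in Qs then 1 else matching_weight k (pi1 a).

Lemma contracted_weight_lreg a : GRing.lreg (contracted_weight a).
Proof.
apply/mulfI; rewrite /contracted_weight.
by case: ifP => _; [exact: oner_neq0 | exact: matching_weight_neq0].
Qed.

Lemma tau_mono_psi_path (p : qpath Q) :
  tau_mono k (psi_path Qs pi0 pi1 p) = pweight contracted_weight p.
Proof.
rewrite /tau_mono /psi_path big_map big_filter big_mkcond /pweight.
by apply: eq_bigr => a _; rewrite /contracted_weight; case: (a \in Qs).
Qed.

Hypothesis contractedQ : contracted_quiver Qs pi0 pi1.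

Lemma valid_psi_path (v : V Q) (s : seq (Ar Q)) : valid (v, s) ->
  valid (psi_path Qs pi0 pi1 (v, s)) /\
  pend (psi_path Qs pi0 pi1 (v, s)) = pi0 (pend (v, s)).
Proof.
case: contractedQ => _ pi0E _ _ pi1E.
elim: s v => [//|a s IH] v; rewrite valid_cons pend_cons => /andP[/eqP av vs].
have [IHv IHe] := IH _ vs; rewrite /psi_path /=.
case: (boolP (a \in Qs)) => aQs /=.
  suff -> : pi0 v = pi0 (hd a) by [].
  by apply/pi0E; rewrite -av; apply: rst_step; exists a.
have [hdE tlE] := pi1E a aQs.
by rewrite valid_cons pend_cons hdE tlE av eqxx.
Qed.

Lemma taubar_psi (x : comb Q k) : taubar (psi Qs pi0 pi1 x) = weight contracted_weight x.
Proof.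
rewrite /taubar /psi big_map big_filter_cond /weight /cweight.
apply: eq_big => [[c [v s]]|e /andP[ve _]] /=; last by rewrite tau_mono_psi_path.
by case: (boolP (valid (v, s))) => // /valid_psi_path[-> _].
Qed.

Hypotheses (dimerQ : is_dimer Q) (dimerQ' : is_dimer Q').
Hypothesis psi_I : forall x : comb Q k, inI x -> inI (psi Qs pi0 pi1 x).

Lemma contracted_weight_rel (p q : qpath Q) : rel_gen p q ->
  pweight contracted_weight p = pweight contracted_weight q.
Proof.
move=> pq; have [vp vq _ _] := rel_gen_parallel (dimer_cyc_cycle dimerQ) pq.
have := taubar_I dimerQ' (psi_I (rel_gen_in_I k (dimer_cyc_cycle dimerQ) pq)).
rewrite taubar_psi /weight cweight_sub !cweight_pathc vp vq => /eqP.
by rewrite subr_eq0 => /eqP.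
Qed.

Let cycQ := dimer_cyc_cycle dimerQ.

Local Notation corner i x := (tau contracted_weight x i i).
Local Notation Rc := (Ralg Q Q' Qs pi0 pi1 k).
Local Notation Sc := (Salg Q Q' Qs pi0 pi1 k).

Lemma taubar_psi_cornerE i P :
  taubar_psi_corner Qs pi0 pi1 i P <-> exists x, P = corner i x.
Proof. by split=> -[x ->]; exists x; rewrite taubar_psi weight_corner. Qed.

Lemma corner_center_Ralg z i : in_center z -> Rc (corner i z).
Proof.
move=> hz; apply: alg_gen_base => j; apply/taubar_psi_cornerE; exists z.
have [_ _ _ [_ connQ] _] := dimerQ.
apply: (tau_center_scalar cycQ contracted_weight_rel hz _ (connQ i j)) => c.
exact: contracted_weight_lreg.
Qed.

Variable gens : seq (comb Q k).
Hypothesis gens_span : forall a : comb Q k, exists zs : seq (comb Q k),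
  [/\ size zs = size gens, (forall z, z \in zs -> in_center z) &
      eqA a (flatten [seq mulc zg.1 zg.2 | zg <- zip zs gens])].

(* Index [0] is [e_i], so that [1] lies in the span. *)
Definition corner_gen i (m : 'I_(size gens).+1) := corner i (nth [::] (idem k i :: gens) m).

Lemma corner_in_span i x : in_span Rc corner_gen i (corner i x).
Proof.
have [zs [szs zsC xE]] := gens_span x.
rewrite (tau_eqA cycQ contracted_weight_rel i i xE) tau_flatten big_map.
rewrite (big_nth ([::], [::])) size_zip szs minnn big_mkord.
exists (fun m => if val m is j.+1 then corner i (nth [::] zs j) else 0) => [[[|j] ltj]|] /=.
- exact: alg_gen0.
- by apply/corner_center_Ralg/zsC/mem_nth; rewrite szs.
rewrite big_ord_recl mul0r add0r; apply: eq_bigr => j _.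
have zjC : in_center (nth [::] zs j) by apply/zsC/mem_nth; rewrite szs.
rewrite nth_zip ?szs //= (tau_center_mulc cycQ contracted_weight_rel _ _ zjC).
by rewrite add0n /corner_gen lift0.
Qed.

Lemma Salg_in_prod_span P : Sc P -> in_prod_span Rc corner_gen P.
Proof.
have Rc0 : Rc 0 := alg_gen0 _.
have Rc1 : Rc 1 := alg_gen1 _.
have RcD : forall a b, Rc a -> Rc b -> Rc (a + b) := @alg_gen_add _ _ _.
have RcM : forall a b, Rc a -> Rc b -> Rc (a * b) := @alg_gen_mul _ _ _.
have span_one i : in_span Rc corner_gen i 1.
  have <- : corner i (idem k i) = 1 by rewrite tau_idem eqxx.
  exact: corner_in_span.
have span_mul i m m' : in_span Rc corner_gen i (corner_gen i m * corner_gen i m').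
  by rewrite /corner_gen tau_corner_mul; apply: corner_in_span.
elim=> [_ [i /taubar_psi_cornerE[x ->]]|c|P1 P2 _ P1span _ P2span|P1 P2 _ P1span _ P2span].
- exact/(in_prod_span_in_span Rc1 RcM span_one)/corner_in_span.
- exact/(in_prod_span_R Rc1 RcM span_one)/alg_gen_const.
- exact: (in_prod_spanD RcD P1span P2span).
- exact: (in_prod_spanM Rc0 Rc1 RcD RcM span_mul P1span P2span).
Qed.

Lemma prod_monomial_Salg c : Sc (prod_monomial corner_gen c).
Proof.
apply: big_ind => [|P P'|i _]; [exact: alg_gen1 | exact: alg_gen_mul |].
by apply: alg_gen_base; exists i; apply/taubar_psi_cornerE; eexists.
Qed.

End Contraction.

Theorem lemma3p16 (k : closedFieldType) (Q Q' : quiver) (Qs : {set Ar Q})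
  (pi0 : V Q -> V Q') (pi1 : Ar Q -> Ar Q') :
  is_dimer Q -> dimer_nondegenerate Q ->
  cyclic_contraction Q Q' Qs pi0 pi1 k ->
  @fg_over_center Q k ->
  fg_module (Ralg Q Q' Qs pi0 pi1 k) (Salg Q Q' Qs pi0 pi1 k).
Proof.
move=> dimerQ _ [[_ dimerQ' contractedQ psi_I] _ _] [gens gens_span].
apply: fg_module_prod_span.
- exact: (prod_monomial_Salg contractedQ (gens := gens)).
- exact: (Salg_in_prod_span contractedQ dimerQ dimerQ' psi_I gens_span).
Qed.
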